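(* Let $\mathcal{P}$ be a declassification policy, with $\Delta^{\mathcal{P}}_P$, $\rho_{\mathcal{P}}$, $I[\cdot]$ and $I[\cdot]^{ev}$ as defined in the context. For every type $\tau$ with $\Delta^{\mathcal{P}}_P\vdash\tau$: $\langle v_1,v_2\rangle\in\mathcal{V}[\tau]_{\rho_{\mathcal{P}}}$ if and only if $\langle v_1,v_2\rangle\in I[\tau]$; and $\langle e_1,e_2\rangle\in\mathcal{E}[\tau]_{\rho_{\mathcal{P}}}$ if and only if $\langle e_1,e_2\rangle\in I[\tau]^{ev}$.
   Context: Language: simply typed call-by-value lambda calculus with types $\tau::=\mathbf{int}\mid\alpha\mid\tau_1\times\tau_2\mid\tau_1\to\tau_2$, values $v::=n\mid\langle v,v\rangle\mid\lambda x:\tau.e$, terms $e::=x\mid v\mid\langle e,e\rangle\mid\pi_ie\mid e_1e_2$ (plus terminating primitive arithmetic operators on $\mathbf{int}$), standard typing and call-by-value reduction ($\to^*$ its reflexive-transitive closure). $\Delta\vdash\tau$ means all type variables of $\tau$ lie in $\Delta$. Logical relation: for type substitutions $\delta_1,\delta_2$ (maps from type variables to closed types) and $\rho\in\mathrm{Rel}(\delta_1,\delta_2)$ (i.e. $\mathrm{dom}\rho=\mathrm{dom}\delta_i$ and $\rho(\alpha)$ is a binary relation between closed values of type $\delta_1(\alpha)$ and of type $\delta_2(\alpha)$): $\langle n,n\rangle\in\mathcal{V}[\mathbf{int}]_\rho$; $\langle\langle v_1,v_2\rangle,\langle v_1',v_2'\rangle\rangle\in\mathcal{V}[\tau_1\times\tau_2]_\rho$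 iff $\langle v_1,v_1'\rangle\in\mathcal{V}[\tau_1]_\rho$ and $\langle v_2,v_2'\rangle\in\mathcal{V}[\tau_2]_\rho$; $\langle v_1,v_2\rangle\in\mathcal{V}[\tau_1\to\tau_2]_\rho$ iff for all $\langle v_1',v_2'\rangle\in\mathcal{V}[\tau_1]_\rho$, $\langle v_1v_1',v_2v_2'\rangle\in\mathcal{E}[\tau_2]_\rho$; $\langle v_1,v_2\rangle\in\mathcal{V}[\alpha]_\rho$ iff $\langle v_1,v_2\rangle\in\rho(\alpha)$; $\langle e_1,e_2\rangle\in\mathcal{E}[\tau]_\rho$ iff $\vdash e_1:\delta_1(\tau)$, $\vdash e_2:\delta_2(\tau)$, $e_1\to^*v_1$, $e_2\to^*v_2$ and $\langle v_1,v_2\rangle\in\mathcal{V}[\tau]_\rho$. Policy $\mathcal{P}=\langle V_{\mathcal{P}},F_{\mathcal{P}}\rangle$: $V_{\mathcal{P}}$ finite set of confidential input variables; $F_{\mathcal{P}}$ partial map from $V_{\mathcal{P}}$ to closed declassification functions $f=\lambda x:\mathbf{int}.e$ of type $\mathbf{int}\to\tau_f$ with $\tau_f$ closed. $V_\top=V_{\mathcal{P}}\setminus\mathrm{dom}F_{\mathcal{P}}$; $\Delta^{\mathcal{P}}_P=\{\alpha_x\mid x\in V_\top\}\cup\{\alpha_f\mid F_{\mathcal{P}}(x)=f\}$ (fresh type variables); $\delta_{\mathcal{P}}$ maps each of them to $\mathbf{int}$. Indistinguishability, for $\Delta^{\mathcal{P}}_P\vdash\tau$: $\langle n,n\rangle\in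 I[\mathbf{int}]$; pairs componentwise at $\tau_1\times\tau_2$; $\langle v_1,v_2\rangle\in I[\tau_1\to\tau_2]$ iff for all $\langle v_1',v_2'\rangle\in I[\tau_1]$, $\langle v_1v_1',v_2v_2'\rangle\in I[\tau_2]^{ev}$; $\langle v_1,v_2\rangle\in I[\alpha_x]$ iff $\vdash v_1,v_2:\mathbf{int}$; $\langle v_1,v_2\rangle\in I[\alpha_f]$ iff $\vdash v_1,v_2:\mathbf{int}$ and $\langle f\,v_1,f\,v_2\rangle\in I[\tau_f]^{ev}$; $\langle e_1,e_2\rangle\in I[\tau]^{ev}$ iff $\vdash e_1,e_2:\delta_{\mathcal{P}}(\tau)$, $e_i\to^*v_i$ and $\langle v_1,v_2\rangle\in I[\tau]$. $\rho_{\mathcal{P}}(\alpha_x)=I[\alpha_x]$ and $\rho_{\mathcal{P}}(\alpha_f)=I[\alpha_f]$; the logical relation at $\rho_{\mathcal{P}}$ is taken with $\delta_1=\delta_2=\delta_{\mathcal{P}}$. *)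

From Stdlib Require Import ZArith List Arith.
Import ListNotations.

Definition var := nat.
Definition tvar := nat.

Inductive ty : Type :=
| TInt : ty
| TVar : tvar -> ty
| TProd : ty -> ty -> ty
| TArrow : ty -> ty -> ty.

(* Terms; [Op f e1 e2] is a (terminating, total) primitive arithmetic
   operator on int given by an arbitrary Coq function [f]. *)
Inductive term : Type :=
| Var : var -> term
| Const : Z -> term
| Pair : term -> term -> term
| Lam : var -> ty -> term -> term
| Fst : term -> term
| Snd : term -> term
| App : term -> term -> term
| Op : (Z -> Z -> Z) -> term -> term -> term.

Inductive value : term -> Prop :=
| v_const : forall n, value (Const n)
| v_pair : forall v1 v2, value v1 -> value v2 -> value (Pair v1 v2)
| v_lam : forall x t e, value (Lam x t e).

Fixpoint ty_closed (t : ty) : Prop :=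
  match t with
  | TInt => True
  | TVar _ => False
  | TProd t1 t2 | TArrow t1 t2 => ty_closed t1 /\ ty_closed t2
  end.

(* Delta |- tau : all type variables of tau lie in Delta *)
Fixpoint ty_wf (Delta : tvar -> Prop) (t : ty) : Prop :=
  match t with
  | TInt => True
  | TVar a => Delta a
  | TProd t1 t2 | TArrow t1 t2 => ty_wf Delta t1 /\ ty_wf Delta t2
  end.

Fixpoint ty_subst (d : tvar -> ty) (t : ty) : ty :=
  match t with
  | TInt => TInt
  | TVar a => d a
  | TProd t1 t2 => TProd (ty_subst d t1) (ty_subst d t2)
  | TArrow t1 t2 => TArrow (ty_subst d t1) (ty_subst d t2)
  end.

Fixpoint lookup (G : list (var * ty)) (x : var) : option ty :=
  match G with
  | [] => None
  | (y, t) :: G' => if Nat.eqb x y then Some t else lookup G' x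
  end.

(* Typing with empty type context: annotations must be closed types. *)
Inductive has_type : list (var * ty) -> term -> ty -> Prop :=
| T_Var : forall G x t, lookup G x = Some t -> has_type G (Var x) t
| T_Const : forall G n, has_type G (Const n) TInt
| T_Pair : forall G e1 e2 t1 t2,
    has_type G e1 t1 -> has_type G e2 t2 -> has_type G (Pair e1 e2) (TProd t1 t2)
| T_Lam : forall G x t1 t2 e,
    ty_closed t1 -> has_type ((x, t1) :: G) e t2 -> has_type G (Lam x t1 e) (TArrow t1 t2)
| T_Fst : forall G e t1 t2, has_type G e (TProd t1 t2) -> has_type G (Fst e) t1
| T_Snd : forall G e t1 t2, has_type G e (TProd t1 t2) -> has_type G (Snd e) t2
| T_App : forall G e1 e2 t1 t2,
    has_type G e1 (TArrow t1 t2) -> has_type G e2 t1 -> has_type G (App e1 e2) t2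
| T_Op : forall G f e1 e2,
    has_type G e1 TInt -> has_type G e2 TInt -> has_type G (Op f e1 e2) TInt.

(* substitution of a closed value (no capture possible) *)
Fixpoint subst (x : var) (v : term) (e : term) : term :=
  match e with
  | Var y => if Nat.eqb x y then v else Var y
  | Const n => Const n
  | Pair e1 e2 => Pair (subst x v e1) (subst x v e2)
  | Lam y t b => Lam y t (if Nat.eqb x y then b else subst x v b)
  | Fst e1 => Fst (subst x v e1)
  | Snd e1 => Snd (subst x v e1)
  | App e1 e2 => App (subst x v e1) (subst x v e2)
  | Op f e1 e2 => Op f (subst x v e1) (subst x v e2)
  end.

Inductive step : term -> term -> Prop :=
| S_Beta : forall x t b v, value v -> step (App (Lam x t b) v) (subst x v b)
| S_Fst : forall v1 v2, value v1 -> value v2 -> step (Fst (Pair v1 v2)) v1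
| S_Snd : forall v1 v2, value v1 -> value v2 -> step (Snd (Pair v1 v2)) v2
| S_Op : forall f a b, step (Op f (Const a) (Const b)) (Const (f a b))
| S_Pair1 : forall e1 e1' e2, step e1 e1' -> step (Pair e1 e2) (Pair e1' e2)
| S_Pair2 : forall v e2 e2', value v -> step e2 e2' -> step (Pair v e2) (Pair v e2')
| S_FstC : forall e e', step e e' -> step (Fst e) (Fst e')
| S_SndC : forall e e', step e e' -> step (Snd e) (Snd e')
| S_App1 : forall e1 e1' e2, step e1 e1' -> step (App e1 e2) (App e1' e2)
| S_App2 : forall v e2 e2', value v -> step e2 e2' -> step (App v e2) (App v e2')
| S_Op1 : forall f e1 e1' e2, step e1 e1' -> step (Op f e1 e2) (Op f e1' e2)
| S_Op2 : forall f v e2 e2', value v -> step e2 e2' -> step (Op f v e2) (Op f v e2').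

Inductive steps : term -> term -> Prop :=
| steps_refl : forall e, steps e e
| steps_step : forall e1 e2 e3, step e1 e2 -> steps e2 e3 -> steps e1 e3.

Definition evrel (Rv : term -> term -> Prop) (t1 t2 : ty) (e1 e2 : term) : Prop :=
  has_type [] e1 t1 /\ has_type [] e2 t2 /\
  exists v1 v2, value v1 /\ value v2 /\ steps e1 v1 /\ steps e2 v2 /\ Rv v1 v2.

Fixpoint LR_V (d1 d2 : tvar -> ty) (rho : tvar -> term -> term -> Prop)
         (t : ty) (v1 v2 : term) : Prop :=
  match t with
  | TInt => exists n, v1 = Const n /\ v2 = Const n
  | TVar a => rho a v1 v2
  | TProd t1 t2 => exists a1 a2 b1 b2, v1 = Pair a1 a2 /\ v2 = Pair b1 b2 /\
                   LR_V d1 d2 rho t1 a1 b1 /\ LR_V d1 d2 rho t2 a2 b2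
  | TArrow t1 t2 => forall w1 w2, LR_V d1 d2 rho t1 w1 w2 ->
                   evrel (LR_V d1 d2 rho t2) (ty_subst d1 t2) (ty_subst d2 t2)
                         (App v1 w1) (App v2 w2)
  end.

Definition LR_E d1 d2 rho (t : ty) (e1 e2 : term) : Prop :=
  evrel (LR_V d1 d2 rho t) (ty_subst d1 t) (ty_subst d2 t) e1 e2.

(* Declassification policy: V_P a finite set (list) of confidential
   variables, F_P a partial map to declassification functions f together
   with their result type tau_f. *)
Record policy := {
  VP : list var;
  FP : var -> option (term * ty)
}.

Definition wf_policy (P : policy) : Prop :=
  forall x f tf, FP P x = Some (f, tf) ->
    In x (VP P) /\ ty_closed tf /\
    (exists y e, f = Lam y TInt e) /\ has_type [] f (TArrow TInt tf).

(* The fresh type variables of Delta^P_P: each is either alpha_x for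
   x in V_top, or alpha_f for a declassification function f (with type tau_f). *)
Inductive tvsrc := SrcTop (x : var) | SrcDecl (f : term) (tf : ty).

(* [nm] names the type variables of Delta^P_P: a bijection between the
   type variables a with nm a <> None and {x | x in V_top} U {f | F_P(x) = f}. *)
Definition naming_ok (P : policy) (nm : tvar -> option tvsrc) : Prop :=
  (forall a s, nm a = Some s ->
     match s with
     | SrcTop x => In x (VP P) /\ FP P x = None
     | SrcDecl f tf => exists x, FP P x = Some (f, tf)
     end) /\
  (forall x, In x (VP P) -> FP P x = None -> exists a, nm a = Some (SrcTop x)) /\
  (forall x f tf, FP P x = Some (f, tf) -> exists a, nm a = Some (SrcDecl f tf)) /\
  (forall a b s, nm a = Some s -> nm b = Some s -> a = b).

Definition DeltaP (nm : tvar -> option tvsrc) (a : tvar) : Prop := nm a <> None.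

Definition deltaP (nm : tvar -> option tvsrc) (a : tvar) : ty :=
  match nm a with Some _ => TInt | None => TVar a end.

Fixpoint Irel (R : tvar -> term -> term -> Prop) (d : tvar -> ty)
         (t : ty) (v1 v2 : term) : Prop :=
  match t with
  | TInt => exists n, v1 = Const n /\ v2 = Const n
  | TVar a => R a v1 v2
  | TProd t1 t2 => exists a1 a2 b1 b2, v1 = Pair a1 a2 /\ v2 = Pair b1 b2 /\
                   Irel R d t1 a1 b1 /\ Irel R d t2 a2 b2
  | TArrow t1 t2 => forall w1 w2, Irel R d t1 w1 w2 ->
                   evrel (Irel R d t2) (ty_subst d t2) (ty_subst d t2)
                         (App v1 w1) (App v2 w2)
  end.

(* I[tau] for closed tau (used for tau_f): no type-variable case arises *)
Definition Iclosed (t : ty) : term -> term -> Prop :=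
  Irel (fun _ _ _ => False) TVar t.
Definition Iclosed_ev (t : ty) : term -> term -> Prop :=
  evrel (Iclosed t) t t.

(* I[alpha_x] and I[alpha_f]; this is also rho_P *)
Definition Ialpha (nm : tvar -> option tvsrc) (a : tvar) (v1 v2 : term) : Prop :=
  match nm a with
  | Some (SrcTop _) => has_type [] v1 TInt /\ has_type [] v2 TInt
  | Some (SrcDecl f tf) =>
      has_type [] v1 TInt /\ has_type [] v2 TInt /\
      Iclosed_ev tf (App f v1) (App f v2)
  | None => False
  end.

Definition rhoP (nm : tvar -> option tvsrc) : tvar -> term -> term -> Prop :=
  Ialpha nm.

Definition I (nm : tvar -> option tvsrc) (t : ty) : term -> term -> Prop :=
  Irel (Ialpha nm) (deltaP nm) t.

Definition Iev (nm : tvar -> option tvsrc) (t : ty) : term -> term -> Prop :=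
  evrel (I nm t) (ty_subst (deltaP nm) t) (ty_subst (deltaP nm) t).


(* With [d1 = d2 = delta_P] the clauses of [V[tau]_rho] and of [I[tau]]
   coincide constructor by constructor, and [rho_P] is literally [I] at the
   type variables; so induction on [tau] identifies the two relations, and
   [E] and [I^ev] are the same evaluation closure of them. *)

Lemma evrel_iff (R1 R2 : term -> term -> Prop) (t1 t2 : ty) (e1 e2 : term) :
  (forall v1 v2, R1 v1 v2 <-> R2 v1 v2) ->
  evrel R1 t1 t2 e1 e2 <-> evrel R2 t1 t2 e1 e2.
Proof.
  intros HR; unfold evrel.
  split; intros (He1 & He2 & v1 & v2 & Hv1 & Hv2 & Hs1 & Hs2 & Hrel);
    repeat split; auto; exists v1, v2; repeat split; auto; apply HR; exact Hrel.
Qed.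

Lemma LR_V_Irel (d : tvar -> ty) (R : tvar -> term -> term -> Prop) (t : ty) :
  forall v1 v2, LR_V d d R t v1 v2 <-> Irel R d t v1 v2.
Proof.
  induction t as [| a | t1 IH1 t2 IH2 | t1 IH1 t2 IH2]; simpl; intros v1 v2.
  - reflexivity.
  - reflexivity.
  - split; intros (a1 & a2 & b1 & b2 & E1 & E2 & H1 & H2);
      exists a1, a2, b1, b2; repeat split; auto;
      [apply IH1 | apply IH2 | apply IH1 | apply IH2]; assumption.
  - split; intros Hfun w1 w2 Hw; apply (evrel_iff _ _ _ _ _ _ IH2);
      apply Hfun, IH1; exact Hw.
Qed.

Lemma LR_E_evrel_Irel (d : tvar -> ty) (R : tvar -> term -> term -> Prop)
  (t : ty) (e1 e2 : term) :
  LR_E d d R t e1 e2 <-> evrel (Irel R d t) (ty_subst d t) (ty_subst d t) e1 e2.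
Proof. apply evrel_iff, LR_V_Irel. Qed.

Theorem lemma3 (P : policy) (nm : tvar -> option tvsrc)
  (HP : wf_policy P) (Hnm : naming_ok P nm) (t : ty)
  (Ht : ty_wf (DeltaP nm) t) :
  (forall v1 v2 : term, value v1 -> value v2 ->
     (LR_V (deltaP nm) (deltaP nm) (rhoP nm) t v1 v2 <-> I nm t v1 v2)) /\
  (forall e1 e2 : term,
     LR_E (deltaP nm) (deltaP nm) (rhoP nm) t e1 e2 <-> Iev nm t e1 e2).
Proof.
  split.
  - intros v1 v2 _ _; apply LR_V_Irel.
  - intros e1 e2; apply LR_E_evrel_Irel.
Qed.
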